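(* A shift space $X$ is dendric if and only if, for every $n\in\mathbb{N}$, the graph $G^L_n(X)$ is acyclic for the labeling and connected; equivalently, if and only if, for every $n\in\mathbb{N}$, the graph $G^R_n(X)$ is acyclic for the labeling and connected.
   Context: $X\subseteq\mathcal{A}^{\mathbb{Z}}$ is a shift space over a finite alphabet $\mathcal{A}$ with language $\mathcal{L}(X)$, $\mathcal{L}_n(X)$ its words of length $n$. For $v\in\mathcal{L}(X)$, $E^L_X(v)=\{a:av\in\mathcal{L}(X)\}$, $E^R_X(v)=\{b:vb\in\mathcal{L}(X)\}$, and $\mathcal{E}_X(v)$ is the bipartite graph whose vertices are the disjoint union of $\{a^L:a\in E^L_X(v)\}$ and $\{b^R:b\in E^R_X(v)\}$, with an edge $\{a^L,b^R\}$ whenever $avb\in\mathcal{L}(X)$. $X$ is dendric if $\mathcal{E}_X(v)$ is a tree for every $v\in\mathcal{L}(X)$. $G^L_n(X)$ (resp. $G^R_n(X)$) is the multigraph with labeled edges on vertex set $\mathcal{A}$ having, for each $v\in\mathcal{L}_n(X)$ and each pair of distinct $a,b\in E^L_X(v)$ (resp. $E^R_X(v)$), an edge labeled $v$ between $a$ and $b$. Acyclic for the labeling: every simple cycle uses only edges with a single label. *)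

From Stdlib Require Import Relations.
From mathcomp Require Import all_boot all_order all_algebra.
Set Implicit Arguments. Unset Strict Implicit. Unset Printing Implicit Defensive.
Import GRing.Theory Num.Theory.

Section Shifts.
Variable A : finType.

Definition point := int -> A.

Definition shift (x : point) : point := fun i => x (i + 1)%R.

Definition occurs (w : seq A) (x : point) (i : int) : Prop :=
  [seq x (i + k%:Z)%R | k <- iota 0 (size w)] = w.

(* X is closed in the product topology (A discrete): if every central
   window [-N, N] of x agrees with some point of X, then x is in X *)
Definition closed_shift (X : point -> Prop) : Prop :=
  forall x : point,
    (forall N : nat, exists y, X y /\
        forall i : int, (`|i| <= N)%N -> y i = x i) -> X x.

Definition shift_invariant (X : point -> Prop) : Prop :=
  forall x : point, X x <-> X (shift x).

Definition shift_space (X : point -> Prop) : Prop :=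
  closed_shift X /\ shift_invariant X.

Definition lang (X : point -> Prop) (w : seq A) : Prop :=
  exists x, X x /\ exists i, occurs w x i.

Definition EL (X : point -> Prop) (v : seq A) (a : A) : Prop := lang X (a :: v).
Definition ER (X : point -> Prop) (v : seq A) (b : A) : Prop := lang X (rcons v b).

(* ---------- extension graph E_X(v) on vertex type A + A
   (inl a = a^L, inr b = b^R) ---------- *)
Definition ext_vertex (X : point -> Prop) (v : seq A) (u : A + A) : Prop :=
  match u with inl a => EL X v a | inr b => ER X v b end.

Definition ext_adj (X : point -> Prop) (v : seq A) (u w : A + A) : Prop :=
  match u, w with
  | inl a, inr b => lang X (a :: rcons v b)
  | inr b, inl a => lang X (a :: rcons v b)
  | _, _ => False
  end.

Definition is_tree (T : Type) (V : T -> Prop) (adj : T -> T -> Prop) : Prop :=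
  (forall u w, V u -> V w -> clos_refl_trans T adj u w) /\
  (forall (k : nat) (c : 'I_k -> T), (3 <= k)%N -> injective c ->
     ~ (forall i : 'I_k, adj (c i) (c (ordS i)))).

Definition dendric (X : point -> Prop) : Prop :=
  forall v, lang X v -> is_tree (ext_vertex X v) (ext_adj X v).

(* ---------- labeled multigraphs on vertex set A, labels in seq A ----------
   E l a b : there is an edge labeled l between a and b (at most one per
   label and unordered pair). *)
Definition GL (X : point -> Prop) (n : nat) (l : seq A) (a b : A) : Prop :=
  size l = n /\ lang X l /\ a <> b /\ EL X l a /\ EL X l b.

Definition GR (X : point -> Prop) (n : nat) (l : seq A) (a b : A) : Prop :=
  size l = n /\ lang X l /\ a <> b /\ ER X l a /\ ER X l b.

Definition label_acyclic (E : seq A -> A -> A -> Prop) : Prop :=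
  forall (k : nat) (xs : 'I_k -> A) (ls : 'I_k -> seq A),
    (2 <= k)%N -> injective xs ->
    (forall i, E (ls i) (xs i) (xs (ordS i))) ->
    (forall i j, i <> j ->
       ~ (ls i = ls j /\
          ((xs i = xs j /\ xs (ordS i) = xs (ordS j)) \/
           (xs i = xs (ordS j) /\ xs (ordS i) = xs j)))) ->
    forall i j, ls i = ls j.

Definition mg_connected (E : seq A -> A -> A -> Prop) : Prop :=
  forall a b : A, clos_refl_trans A (fun x y => exists l, E l x y) a b.

End Shifts.

From mathcomp Require Import all_boot all_order all_algebra.
From mathcomp Require Import boolp zify.
From Stdlib Require Import Relations.

Set Implicit Arguments. Unset Strict Implicit. Unset Printing Implicit Defensive.

(* For a word u of length n, the edges of G^L_{n+1} labelled ub join exactly the left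
   neighbours of b^R in the extension graph E(u), while an edge labelled u'b with
   u' <> u projects to an edge of G^L_n labelled u' <> u.  Read "acyclic" as "every
   edge is a bridge" in E(u), and "acyclic for the labeling" as "the ends of an edge
   labelled l are not joined through edges with other labels" in G^L_n.  If G^L_n has
   the latter property, paths of G^L_{n+1} between left extensions of u project onto
   paths of E(u), and paths of E(u) always lift to G^L_{n+1}.  Hence, when G^L_n is
   connected and has the labelled property, all E(u) with |u| = n are connected iff
   G^L_{n+1} is connected, and all of them have the bridge property iff G^L_{n+1} has
   the labelled one; induction on n concludes.  Reversing words exchanges G^L and
   G^R. *)

Section ReflTransClosure.
Variable T : Type.
Implicit Types R S : T -> T -> Prop.

Lemma clos_rt_map U (R : T -> T -> Prop) (S : U -> U -> Prop) (f : T -> U) a b :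
  (forall x y, R x y -> S (f x) (f y)) ->
  clos_refl_trans T R a b -> clos_refl_trans U S (f a) (f b).
Proof.
move=> fRS; elim=> [x y /fRS|x|x y z _ IHxy _ IHyz]; [exact: rt_step|exact: rt_refl|].
exact: rt_trans IHxy IHyz.
Qed.

Lemma clos_rt_mono R S a b :
  (forall x y, R x y -> S x y) -> clos_refl_trans T R a b -> clos_refl_trans T S a b.
Proof. exact: (clos_rt_map (f := id)). Qed.

Lemma clos_rt_sym R a b : (forall x y, R x y -> R y x) ->
  clos_refl_trans T R a b -> clos_refl_trans T R b a.
Proof.
move=> Rsym; elim=> [x y /Rsym|x|x y z _ IHxy _ IHyz]; [exact: rt_step|exact: rt_refl|].
exact: rt_trans IHyz IHxy.
Qed.

Lemma clos_rt_invariant R (P : T -> Prop) a b :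
  P a -> (forall x y, P x -> R x y -> P y) -> clos_refl_trans T R a b -> P b.
Proof.
by move=> Pa PR; apply: (clos_refl_trans_ind_left T R a P Pa) => y z _ Py /(PR _ _ Py).
Qed.

Lemma clos_rt_chain R (x : nat -> T) m n : m <= n ->
  (forall i, m <= i < n -> R (x i) (x i.+1)) -> clos_refl_trans T R (x m) (x n).
Proof.
move=> mn; have [d ->] : exists d, n = m + d by exists (n - m); rewrite subnKC.
elim: d => [|d IHd] Rx; first by rewrite addn0; apply: rt_refl.
rewrite addnS; apply: rt_trans (IHd _) (rt_step _ _ _ _ (Rx _ _)) => [i /andP[mi id]|].
  by apply: Rx; rewrite mi addnS ltnS ltnW.
by rewrite leq_addr addnS leqnn.
Qed.

End ReflTransClosure.

Section Paths.
Variable T : eqType.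
Implicit Types R : T -> T -> Prop.

Lemma clos_rt_uniq_path R a b : clos_refl_trans T R a b ->
  exists p, [/\ uniq (a :: p), path (fun x y => `[< R x y >]) a p & last a p = b].
Proof.
pose reach x := exists p, path (fun x y => `[< R x y >]) a p /\ last a p = x.
move=> Rab; have [p [Rp <-]] : reach b.
  apply: (clos_rt_invariant (P := reach)) Rab; first by exists [::].
  move=> x y [p [Rp <-]] Rxy; exists (rcons p y).
  by rewrite rcons_path last_rcons Rp; split=> //; apply/asboolP.
by case/shortenP: Rp => q Rq uq _; exists q.
Qed.

Lemma path_labels L (Q : L -> T -> T -> Prop) l0 x p :
  path (fun u w => `[< exists m, Q m u w >]) x p ->
  exists t, size t = size p /\
    forall i, i < size p -> Q (nth l0 t i) (nth x (x :: p) i) (nth x p i).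
Proof.
elim: p x => [|y p IHp] x /=; first by exists [::].
case/andP=> /asboolP[m Qm] /IHp[t [st Qt]].
exists (m :: t); split=> [|[|i] //= ip]; first by rewrite /= st.
rewrite ltnS in ip; have ip' : i < size (y :: p) by exact: ltnW.
by rewrite !(set_nth_default y x) //; apply: Qt.
Qed.

Lemma nth_ord_inj (s : seq T) x0 : uniq s ->
  injective (fun i : 'I_(size s) => nth x0 s i).
Proof. by move=> us i j /eqP; rewrite nth_uniq // => /eqP/val_inj. Qed.

Lemma path_cycle (P : nat -> T -> T -> Prop) x p :
  (forall i, i < size p -> P i (nth x (x :: p) i) (nth x p i)) ->
  P (size p) (last x p) x ->
  forall i : 'I_(size (x :: p)),
    P i (nth x (x :: p) i) (nth x (x :: p) (ordS i)).
Proof.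
move=> Pp Plast [i /=]; rewrite ltnS leq_eqVlt => /orP[/eqP-> | ip].
  by rewrite modnn nth_last.
by rewrite modn_small //; apply: Pp.
Qed.

End Paths.

Section CyclicIndexing.
Variables (k : nat) (k_gt0 : 0 < k).

Definition ord_mod (i : nat) : 'I_k := Ordinal (ltn_pmod i k_gt0).

Lemma ord_mod_ord (i : 'I_k) : ord_mod i = i.
Proof. by apply: val_inj; rewrite /= modn_small. Qed.

Lemma ord_mod_mod i : ord_mod (i %% k) = ord_mod i.
Proof. by apply: val_inj; rewrite /= modn_mod. Qed.

Lemma ord_modS i : ord_mod i.+1 = ordS (ord_mod i).
Proof. by apply: val_inj; rewrite /= -[(i %% k).+1]addn1 modnDml addn1. Qed.

End CyclicIndexing.

Section SimpleGraphs.
Variables (T : eqType) (adj : T -> T -> Prop).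
Hypothesis adj_sym : forall x y, adj x y -> adj y x.

Definition remove_edge x y u w := adj u w /\ ~ (u = x /\ w = y) /\ ~ (u = y /\ w = x).

Definition acyclic := forall (k : nat) (c : 'I_k -> T),
  3 <= k -> injective c -> ~ (forall i : 'I_k, adj (c i) (c (ordS i))).

Definition bridges := forall x y, adj x y -> ~ clos_refl_trans T (remove_edge x y) x y.

Lemma acyclic_bridges : (forall x, ~ adj x x) -> acyclic -> bridges.
Proof.
move=> adj_irr acyc x y adj_xy /clos_rt_uniq_path[p [up xp yE]]; subst y.
case: p up xp adj_xy => [|z [|z' p]] up xp adj_xy; first exact: adj_irr adj_xy.
  by move: xp => /= /andP[/asboolP[_ [nxz _]] _]; apply: nxz.
apply: (acyc _ _ _ (nth_ord_inj (x0 := x) up)) => //.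
apply: (path_cycle (P := fun=> adj)) => [i ip|]; first exact: (asboolP _ (pathP x xp i ip)).1.
exact: adj_sym.
Qed.

Lemma bridges_acyclic : bridges -> acyclic.
Proof.
move=> brg k c k3 c_inj c_cyc; have k_gt0 : 0 < k by apply: leq_trans k3.
pose C i := c (ord_mod k_gt0 i).
have C_adj i : adj (C i) (C i.+1) by rewrite /C ord_modS.
have C_mod i j : C i = C j -> i %% k = j %% k by move/c_inj/(congr1 val).
apply: (brg (C 1) (C 0)); first exact/adj_sym/C_adj.
have -> : C 0 = C k by rewrite /C -(ord_mod_mod _ k) modnn.
apply: clos_rt_chain; first exact: leq_trans k3.
move=> i /andP[i_gt0 ik]; split; first exact: C_adj.
have k1 : 1 < k by apply: leq_trans k3.
split=> -[/C_mod Ci /C_mod Ci1].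
  rewrite !modn_small // in Ci; move: Ci1; rewrite Ci modnn modn_small //.
by move: Ci; rewrite modnn modn_small //; lia.
Qed.

End SimpleGraphs.

Section LabeledGraphs.
Variable A : finType.
Implicit Type E : seq A -> A -> A -> Prop.

Definition off_label E l x y := exists m, m <> l /\ E m x y.

Definition label_bridges E :=
  forall l a b, E l a b -> ~ clos_refl_trans A (off_label E l) a b.

Lemma label_acyclic_bridges E :
  (forall l a b, E l a b -> E l b a) -> (forall l a b, E l a b -> a <> b) ->
  label_acyclic E -> label_bridges E.
Proof.
move=> Esym Eneq acyc l a b Eab /clos_rt_uniq_path[p [up ap bE]]; subst b.
(* Closing the path by the [l]-edge gives a cycle on which [l] occurs only once. *)
have [t [st Et]] := path_labels l ap.
case: p up ap st Et Eab => [|z p] up _ st Et Eab; first exact: Eneq Eab erefl.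
set s := a :: z :: p; have ss : size s = (size t).+1 by rewrite st.
pose ls i := nth l (rcons t l) i.
have ls_t i : i < size t -> ls i = nth l t i by move=> it; rewrite /ls nth_rcons it.
have ls_last : ls (size t) = l by rewrite /ls nth_rcons ltnn eqxx.
have ls_neq i : i < size t -> ls i <> l.
  by move=> it; rewrite ls_t //; case: (Et i); rewrite -?st.
have edges (i : 'I_(size s)) : E (ls i) (nth a s i) (nth a s (ordS i)).
  apply: (path_cycle (P := fun i => E (ls i))) => [{}i ip|].
    by rewrite ls_t ?st //; exact: (Et i ip).2.
  by rewrite -st ls_last; exact: Esym.
have s_inj := nth_ord_inj (x0 := a) up.
have ls_lt (i j : 'I_(size s)) : i <> j -> ls i = ls j -> i < size t.
  move=> ij lsij; have [] := ltngtP i (size t); first by [].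
    by move=> ti; have := ltn_ord i; lia.
  move=> iE; have [jt|tj|jE] := ltngtP j (size t).
  - by case: (ls_neq j jt); rewrite -lsij -ls_last; congr ls.
  - by have := ltn_ord j; lia.
  - by case: ij; apply: ord_inj; rewrite iE jE.
have val_ordS (i : 'I_(size s)) : i < size t -> val (ordS i) = i.+1.
  by case: i => i ? /= it; rewrite modn_small //; move: it; rewrite st /=; lia.
have t0 : ls 0 <> l by apply: ls_neq; rewrite st.
apply: t0; rewrite -ls_last st.
apply: (acyc _ _ (fun i : 'I_(size s) => ls i) _ s_inj edges _ ord0 ord_max) => //.
move=> i j ij [lsij [[/s_inj ij' _] | [/s_inj iSj /s_inj Sij]]]; first exact: ij.
have it := ls_lt _ _ ij lsij; have jt := ls_lt _ _ (nesym ij) (esym lsij).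
by move: (congr1 val iSj) (congr1 val Sij); rewrite !val_ordS //=; lia.
Qed.

Lemma label_bridges_acyclic E :
  (forall l x y z w, E l x y -> E l z w -> y <> z -> E l y z) ->
  label_bridges E -> label_acyclic E.
Proof.
move=> Eclique brg k xs ls k2 xs_inj edges _; have k_gt0 : 0 < k by apply: leq_trans k2.
(* Otherwise take a maximal run [p0 <= i < q] of labels other than [l], enclosed by
   [l]-edges at [p0 - 1] and [q]: its ends are joined by an [l]-edge (clique property)
   and through the run. *)
set l := ls (Ordinal k_gt0).
suff ls_l j : ls j = l by move=> i j; rewrite !ls_l.
pose X i := xs (ord_mod k_gt0 i); pose F i := ls (ord_mod k_gt0 i).
have X_edge i : E (F i) (X i) (X i.+1) by rewrite /X /F ord_modS.
have X_mod i i' : X i = X i' -> i %% k = i' %% k by move/xs_inj/(congr1 val).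
have F0 : F 0 = l by congr ls; apply: val_inj; rewrite /= mod0n.
have Fk : F k = l by rewrite /F -ord_mod_mod modnn.
apply/eqP/negPn/negP => Fj; rewrite -(ord_mod_ord k_gt0 j) -/(F j) in Fj.
have [p0 Fp0 p0_min] := ex_minnP (ex_intro (fun i => F i != l) j Fj).
have [p p0E] : exists p, p0 = p.+1 by case: p0 Fp0 {p0_min} => [|p]; [rewrite F0 eqxx|exists p].
have Fp : F p = l by apply/eqP/negPn/negP => /p0_min; rewrite p0E ltnn.
have p0k : p0 < k by apply: leq_ltn_trans (p0_min _ Fj) _.
have [q /andP[p0q /eqP Fq] q_min] := ex_minnP (ex_intro (fun i => (p0 < i) && (F i == l)) k
  (introT andP (conj p0k (introT eqP Fk)))).
have qk : q <= k by apply: q_min; rewrite p0k Fk eqxx.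
apply: (brg l (X p0) (X q)).
  apply: (Eclique l (X p) _ _ (X q.+1)); first by rewrite p0E -Fp.
    by rewrite -Fq.
  move/X_mod; rewrite (modn_small p0k); case: ltngtP qk => // [qk' _|-> _].
    by rewrite modn_small //; lia.
  by rewrite modnn p0E.
apply: clos_rt_chain => [|i /andP[p0i iq]]; first exact: ltnW.
exists (F i); split; last exact: X_edge.
case: (ltngtP p0 i) p0i => // [p0i' _|<- _]; last exact/eqP.
by move/eqP=> Fi; have := q_min i; rewrite p0i' Fi leqNgt iq => /(_ isT).
Qed.

End LabeledGraphs.

Section LeftGraphs.
Variables (A : finType) (L : seq A -> Prop).
Hypothesis L_behead : forall a w, L (a :: w) -> L w.
Hypothesis L_belast : forall w b, L (rcons w b) -> L w.
Hypothesis L_extendl : forall w, L w -> exists a, L (a :: w).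
Hypothesis L_letter : forall a, L [:: a].

Definition ext_vtx (v : seq A) (x : A + A) : Prop :=
  match x with inl a => L (a :: v) | inr b => L (rcons v b) end.

Definition ext_edge (v : seq A) (x y : A + A) : Prop :=
  match x, y with
  | inl a, inr b => L (a :: rcons v b)
  | inr b, inl a => L (a :: rcons v b)
  | _, _ => False
  end.

Definition dendric_lang := forall v, L v -> is_tree (ext_vtx v) (ext_edge v).

Definition left_graph (n : nat) (l : seq A) (a b : A) : Prop :=
  size l = n /\ L l /\ a <> b /\ L (a :: l) /\ L (b :: l).

Definition right_in (R : A -> Prop) (x : A + A) : Prop :=
  if x is inr b then R b else True.

Definition ext_edge_within v R x y := ext_edge v x y /\ right_in R x /\ right_in R y.

Lemma ext_edge_sym v x y : ext_edge v x y -> ext_edge v y x.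
Proof. by case: x; case: y. Qed.

Lemma ext_edge_irr v x : ~ ext_edge v x x.
Proof. by case: x => ? [] . Qed.

Lemma L_ext_belast a u b : L (a :: rcons u b) -> L (a :: u).
Proof. exact: (@L_belast (a :: u) b). Qed.

Lemma left_graph_sym n l a b : left_graph n l a b -> left_graph n l b a.
Proof. by case=> [? [? [ab [? ?]]]]; do !split=> //; apply: nesym. Qed.

Lemma left_graph_neq n l a b : left_graph n l a b -> a <> b.
Proof. by case=> [_ [_ []]]. Qed.

Lemma left_graph_clique n l x y z w :
  left_graph n l x y -> left_graph n l z w -> y <> z -> left_graph n l y z.
Proof. by move=> [? [? [_ [_ ?]]]] [_ [_ [_ [? _]]]]. Qed.

Lemma left_graphS_rcons n m x y : left_graph n.+1 m x y -> exists u b, m = rcons u b.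
Proof. by case/lastP: m => [[]|u b _] //; exists u, b. Qed.

Lemma left_graph_rcons n u b x y : left_graph n.+1 (rcons u b) x y <->
  [/\ size u = n, x <> y, L (x :: rcons u b) & L (y :: rcons u b)].
Proof.
rewrite /left_graph size_rcons; split=> [[[su] [_ [? [? ?]]]] | [su ? Lx ?]] //.
by do !split=> //; [rewrite su | exact: L_behead Lx].
Qed.

Lemma left_graph_belast n u b x y : left_graph n.+1 (rcons u b) x y -> left_graph n u x y.
Proof.
case/left_graph_rcons=> su xy Lx Ly; do !split=> //.
- exact: L_belast (L_behead Lx).
- exact: L_ext_belast Lx.
- exact: L_ext_belast Ly.
Qed.

Lemma left_graph_off_label_eq n u c x : label_bridges (left_graph n) ->
  L u -> size u = n -> L (c :: u) -> L (x :: u) ->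
  clos_refl_trans A (off_label (left_graph n) u) c x -> c = x.
Proof.
move=> brg Lu su Lc Lx cx; case: (eqVneq c x) => // /eqP cx'.
by case: (brg u c x _ cx); do !split.
Qed.

Lemma ext_within_right u R a w :
  clos_refl_trans _ (ext_edge_within u R) (inl a) w -> right_in R w.
Proof. by apply: clos_rt_invariant => // x y _ [_ []]. Qed.

Lemma left_graph_path_of_ext n u R a x : size u = n ->
  clos_refl_trans _ (ext_edge_within u R) (inl a) (inl x) ->
  clos_refl_trans A (fun y z => exists2 b, R b & left_graph n.+1 (rcons u b) y z) a x.
Proof.
move=> su; set G := fun y z => _.
pose P w := match w with
  | inl y => clos_refl_trans A G a y
  | inr b => exists2 y, L (y :: rcons u b) & clos_refl_trans A G a y end.
apply: (clos_rt_invariant (P := P)); first exact: rt_refl.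
rewrite {}/P; case=> [y|b] [z|b'] Py [] //= Eyz [Rb _]; first by exists y.
case: Py => y Ly ay; case: (eqVneq y z) => [<- //|yz].
apply: rt_trans ay (rt_step _ _ _ _ _); exists b => //.
by apply/left_graph_rcons; split=> //; exact/eqP.
Qed.

Lemma ext_path_of_left_graph n u R a a' : label_bridges (left_graph n) ->
  L u -> size u = n -> L (a :: u) -> L (a' :: u) ->
  clos_refl_trans A
    (fun y z => exists m, (forall b, m = rcons u b -> R b) /\ left_graph n.+1 m y z) a a' ->
  clos_refl_trans _ (ext_edge_within u R) (inl a) (inl a').
Proof.
move=> brg Lu su La La' aa'.
(* An edge with label [ub] crosses [E(u)] through [b^R]; any other label projects to an
   edge of [G^L_n] labelled [<> u], and these cannot join two left extensions of [u]. *)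
pose P x := exists2 c, L (c :: u) & clos_refl_trans _ (ext_edge_within u R) (inl a) (inl c)
  /\ clos_refl_trans A (off_label (left_graph n) u) c x.
suff [c Lc [ac ca']] : P a' by rewrite -(left_graph_off_label_eq brg Lu su Lc La' ca').
apply: (clos_rt_invariant (P := P)) aa'; rewrite {}/P.
  by exists a => //; split; apply: rt_refl.
move=> x y [c Lc [ac cx]] [m [mR Gm]].
have [u' [b mE]] := left_graphS_rcons Gm; subst m.
case/left_graph_rcons: (Gm) => su' xy Lx Ly.
have [uE|uu'] := eqVneq u' u; last first.
  exists c => //; split=> //; apply: rt_trans cx (rt_step _ _ _ _ _).
  by exists u'; split; [exact/eqP | exact: left_graph_belast Gm].
subst u'; have cxE := left_graph_off_label_eq brg Lu su Lc (L_ext_belast Lx) cx; subst x.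
exists y; first exact: L_ext_belast Ly.
split; last exact: rt_refl.
have Rb := mR b erefl.
apply: rt_trans ac (rt_trans _ _ _ (inr b) _ (rt_step _ _ _ _ _) (rt_step _ _ _ _ _));
  by do !split.
Qed.

Lemma ext_edge_bridge n u a b : label_bridges (left_graph n.+1) -> size u = n ->
  L (a :: rcons u b) ->
  ~ clos_refl_trans _ (remove_edge (ext_edge u) (inl a) (inr b)) (inl a) (inr b).
Proof.
move=> brg su Lab ab.
(* The path enters [b^R] from some [a'^L] with [a' <> a], which is reached avoiding
   [b^R]; lifting, [a] and [a'] are joined in [G^L_{n+1}] without the label [ub]. *)
set within := ext_edge_within u (fun b' => b' <> b).
pose found := exists a', [/\ a' <> a, L (a' :: rcons u b)
  & clos_refl_trans _ within (inl a) (inl a')].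
suff [a' [a'a La' aa']] : found.
  apply: (brg (rcons u b) a a'); first by apply/left_graph_rcons; split=> // /esym.
  apply: clos_rt_mono (left_graph_path_of_ext su aa') => x y [b' b'b Gxy].
  by exists (rcons u b'); split=> // /rcons_inj[].
have : found \/ clos_refl_trans _ within (inl a) (inr b).
  apply: (clos_rt_invariant (P := fun w => found \/ clos_refl_trans _ within (inl a) w)) ab.
    by right; apply: rt_refl.
  move=> w w' [? | aw] [Eww' [not_ab _]]; first by left.
  have Rw := ext_within_right aw.
  case: w' Eww' not_ab => [a'|b'] Eww' not_ab.
    by right; apply: rt_trans aw (rt_step _ _ _ _ _); do !split.
  case: (eqVneq b' b) => [E|b'b]; last first.
    by right; apply: rt_trans aw (rt_step _ _ _ _ _); do !split=> //; exact/eqP.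
  subst b'; case: w Eww' not_ab aw {Rw} => [a'|//] La' not_ab aa'.
  by left; exists a'; split=> // a'a; apply: not_ab; rewrite a'a.
by case=> // /ext_within_right.
Qed.

Lemma ext_connected n u : label_bridges (left_graph n) -> mg_connected (left_graph n.+1) ->
  L u -> size u = n ->
  forall x y, ext_vtx u x -> ext_vtx u y -> clos_refl_trans _ (ext_edge u) x y.
Proof.
move=> brg conn Lu su.
have to_left x : ext_vtx u x -> exists2 a, L (a :: u) & clos_refl_trans _ (ext_edge u) x (inl a).
  case: x => [a|b] /= Lx; first by exists a => //; apply: rt_refl.
  have [a Lab] := L_extendl Lx; exists a; [exact: L_ext_belast Lab | exact: rt_step].
move=> x y /to_left[a La xa] /to_left[a' La' ya'].
apply: rt_trans xa (rt_trans _ _ _ _ _ _ (clos_rt_sym (@ext_edge_sym u) ya')).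
apply: clos_rt_mono (ext_path_of_left_graph (R := fun=> True) brg Lu su La La' _).
  by move=> ? ? [].
by apply: clos_rt_mono (conn a a') => ? ? [m Gm]; exists m.
Qed.

Lemma ext_bridges n u : label_bridges (left_graph n.+1) -> size u = n -> bridges (ext_edge u).
Proof.
move=> brg su [a|b] [a'|b'] /= Lab //; first exact: (ext_edge_bridge brg su Lab).
move=> ba; apply: (ext_edge_bridge brg su Lab).
apply: clos_rt_sym => [x y [/ext_edge_sym Exy [n1 n2]] | ].
  by split=> //; split=> -[? ?]; auto.
by apply: clos_rt_mono ba => x y [Exy [n1 n2]]; split=> //; split=> -[? ?]; auto.
Qed.

Lemma left_graph_label_bridgesS n : label_bridges (left_graph n) ->
  (forall u, L u -> size u = n -> bridges (ext_edge u)) -> label_bridges (left_graph n.+1).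
Proof.
move=> brg ext_brg m a a' Gm aa'.
have [u [b mE]] := left_graphS_rcons Gm; subst m.
case/left_graph_rcons: (Gm) => su a_a' La La'.
have Lu : L u by apply: L_belast (L_behead La).
apply: (ext_brg u Lu su (inl a) (inr b) La).
have ext_aa' : clos_refl_trans _ (ext_edge_within u (fun b' => b' <> b)) (inl a) (inl a').
  apply: ext_path_of_left_graph brg Lu su (L_ext_belast La) (L_ext_belast La') _.
  apply: clos_rt_mono aa' => x y [m [ml Gxy]]; exists m; split=> // b' mE b'b.
  by apply: ml; rewrite mE b'b.
apply: rt_trans (clos_rt_mono _ ext_aa') (rt_step _ _ _ _ _) => [x y [Exy [Rx Ry]]|].
  split=> //; split=> -[xE yE]; [rewrite yE in Ry | rewrite xE in Rx].
    exact: Ry.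
  exact: Rx.
by split=> //; split=> -[] // [/esym].
Qed.

Lemma left_graph_connectedS n : mg_connected (left_graph n) ->
  (forall u, L u -> size u = n ->
     forall x y, ext_vtx u x -> ext_vtx u y -> clos_refl_trans _ (ext_edge u) x y) ->
  mg_connected (left_graph n.+1).
Proof.
move=> conn ext_conn a b.
apply: clos_rt_invariant (conn a b) => [|x y ax [u [su [Lu [xy [Lx Ly]]]]]].
  exact: rt_refl.
apply: rt_trans ax (clos_rt_mono _ (left_graph_path_of_ext (R := fun=> True) su _)).
  by move=> ? ? [b' _ G]; exists (rcons u b').
apply: clos_rt_mono (ext_conn u Lu su (inl x) (inl y) Lx Ly) => p q Epq.
by split=> //; case: p q Epq => ? [].
Qed.

Lemma left_graph0 : label_bridges (left_graph 0) /\ mg_connected (left_graph 0).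
Proof.
split=> [l a b [/size0nil -> [_ [ab _]]] | a b].
  move=> ab_path; apply: ab; apply: (clos_rt_invariant (P := eq a)) ab_path => // x y ->.
  by case=> m [ml [/size0nil mE _]]; case: (ml mE).
case: (eqVneq a b) => [<-|ab]; first exact: rt_refl.
apply: rt_step; exists [::]; do !split=> //; first exact: L_behead (L_letter a).
exact/eqP.
Qed.

Theorem dendric_lang_leftP :
  dendric_lang <-> forall n, label_acyclic (left_graph n) /\ mg_connected (left_graph n).
Proof.
have acyclicE n : label_acyclic (left_graph n) <-> label_bridges (left_graph n).
  split; first exact/label_acyclic_bridges/left_graph_neq/left_graph_sym.
  exact/label_bridges_acyclic/left_graph_clique.
split=> [dend n | props v Lv].
  suff [] : label_bridges (left_graph n) /\ mg_connected (left_graph n) by rewrite acyclicE.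
  elim: n => [|n [brg conn]]; first exact: left_graph0.
  split; first apply: left_graph_label_bridgesS brg _ => u Lu _.
    exact: acyclic_bridges (@ext_edge_sym u) (@ext_edge_irr u) (dend u Lu).2.
  by apply: left_graph_connectedS conn _ => u Lu _; apply: (dend u Lu).1.
have brg n : label_bridges (left_graph n) by apply/acyclicE; exact: (props n).1.
split; first exact: ext_connected (brg _) (props _).2 Lv erefl.
exact: bridges_acyclic (@ext_edge_sym v) (ext_bridges (brg _) erefl).
Qed.

End LeftGraphs.

Lemma is_tree_involution T (V V' : T -> Prop) (adj adj' : T -> T -> Prop) (f : T -> T) :
  involutive f -> (forall x, V' x -> V (f x)) ->
  (forall x y, adj x y -> adj' (f x) (f y)) -> (forall x y, adj' x y -> adj (f x) (f y)) ->
  is_tree V adj -> is_tree V' adj'.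
Proof.
move=> fK fV fadj fadj' [conn acyc]; split=> [x y /fV Vx /fV Vy | k c k3 c_inj c_cyc].
  by rewrite -(fK x) -(fK y); apply: clos_rt_map fadj (conn _ _ Vx Vy).
by apply: (acyc k (f \o c) k3 (inj_comp (inv_inj fK) c_inj)) => i; apply: fadj'.
Qed.

Section Relabel.
Variable A : finType.
Implicit Types E : seq A -> A -> A -> Prop.

Lemma label_acyclic_relabel E E' (f : seq A -> seq A) : injective f ->
  (forall l a b, E' l a b -> E (f l) a b) -> label_acyclic E -> label_acyclic E'.
Proof.
move=> f_inj EE' acyc k xs ls k2 xs_inj edges dist i j; apply: (f_inj).
apply: (acyc k xs (f \o ls)) => // [i' | i' j' ij' [/f_inj lsij orient]]; first exact: EE'.
exact: dist ij' (conj lsij orient).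
Qed.

Lemma mg_connected_relabel E E' :
  (forall l a b, E l a b -> exists l', E' l' a b) -> mg_connected E -> mg_connected E'.
Proof. by move=> EE' conn a b; apply: clos_rt_mono (conn a b) => x y [l /EE']. Qed.

End Relabel.

Section RightGraphs.
Variables (A : finType) (L : seq A -> Prop).

Definition right_graph (n : nat) (l : seq A) (a b : A) : Prop :=
  size l = n /\ L l /\ a <> b /\ L (rcons l a) /\ L (rcons l b).

Definition rev_lang (w : seq A) : Prop := L (rev w).

Definition swap_side (x : A + A) : A + A :=
  match x with inl a => inr a | inr b => inl b end.

Lemma swap_sideK : involutive swap_side.
Proof. by case. Qed.

Lemma ext_vtx_rev v x : ext_vtx rev_lang v x <-> ext_vtx L (rev v) (swap_side x).
Proof. by case: x => a; rewrite /= /rev_lang ?rev_cons ?rev_rcons. Qed.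

Lemma ext_edge_rev v x y :
  ext_edge rev_lang v x y <-> ext_edge L (rev v) (swap_side x) (swap_side y).
Proof.
by case: x => a; case: y => b; rewrite /= /rev_lang ?rev_cons ?rev_rcons //= -rcons_cons.
Qed.

Lemma dendric_lang_rev : dendric_lang L <-> dendric_lang rev_lang.
Proof.
split=> dend v Lv.
  apply: (is_tree_involution swap_sideK _ _ _ (dend _ Lv)) => [x /ext_vtx_rev //|x y|].
    by move=> Exy; apply/ext_edge_rev; rewrite !swap_sideK.
  by move=> x y /ext_edge_rev.
have Lv' : rev_lang (rev v) by rewrite /rev_lang revK.
apply: (is_tree_involution swap_sideK _ _ _ (dend _ Lv')) => [x Vx|x y|x y Exy].
- by apply/ext_vtx_rev; rewrite revK swap_sideK.
- by move/ext_edge_rev; rewrite revK.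
- by apply/ext_edge_rev; rewrite revK !swap_sideK.
Qed.

Lemma right_graph_rev n l a b : right_graph n l a b <-> left_graph rev_lang n (rev l) a b.
Proof. by rewrite /left_graph /rev_lang size_rev revK !rev_cons revK. Qed.

Hypothesis L_behead : forall a w, L (a :: w) -> L w.
Hypothesis L_belast : forall w b, L (rcons w b) -> L w.
Hypothesis L_extendr : forall w, L w -> exists b, L (rcons w b).
Hypothesis L_letter : forall a, L [:: a].

Theorem dendric_lang_rightP :
  dendric_lang L <-> forall n, label_acyclic (right_graph n) /\ mg_connected (right_graph n).
Proof.
have rev_behead a w : rev_lang (a :: w) -> rev_lang w.
  by rewrite /rev_lang rev_cons => /L_belast.
have rev_belast w b : rev_lang (rcons w b) -> rev_lang w.
  by rewrite /rev_lang rev_rcons => /L_behead.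
have rev_extendl w : rev_lang w -> exists a, rev_lang (a :: w).
  by move=> /L_extendr[b Lb]; exists b; rewrite /rev_lang rev_cons.
rewrite dendric_lang_rev (dendric_lang_leftP rev_behead rev_belast rev_extendl L_letter).
have rev_inj := can_inj (@revK A).
split=> graphs n; have [acyc conn] := graphs n; split.
- by apply: label_acyclic_relabel rev_inj _ acyc => l a b /right_graph_rev.
- apply: mg_connected_relabel conn => l a b Gab; exists (rev l).
  by apply/right_graph_rev; rewrite revK.
- apply: label_acyclic_relabel rev_inj _ acyc => l a b Gab.
  by apply/right_graph_rev; rewrite revK.
- by apply: mg_connected_relabel conn => l a b /right_graph_rev Gab; exists (rev l).
Qed.

End RightGraphs.

Section ShiftLanguage.
Variables (A : finType) (X : point A -> Prop).

Lemma occursP (w : seq A) x i d : occurs w x i <->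
  forall k, k < size w -> x (i + k%:Z)%R = nth d w k.
Proof.
split=> [xw k kw | xw]; first by rewrite -xw (nth_map 0) ?size_iota // nth_iota.
apply: (@eq_from_nth _ d); rewrite size_map size_iota // => k kw.
by rewrite (nth_map 0) ?size_iota // nth_iota // add0n xw.
Qed.

Lemma lang_behead a w : lang X (a :: w) -> lang X w.
Proof.
case=> x [Xx [i /(occursP _ _ _ a) xw]]; exists x; split=> //; exists (i + 1)%R.
apply/(occursP _ _ _ a) => k kw; rewrite -[RHS]/(nth a (a :: w) k.+1) -xw //; congr x; lia.
Qed.

Lemma lang_belast w b : lang X (rcons w b) -> lang X w.
Proof.
case=> x [Xx [i /(occursP _ _ _ b) xw]]; exists x; split=> //; exists i.
apply/(occursP _ _ _ b) => k kw.
by rewrite xw ?nth_rcons ?kw // size_rcons ltnW.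
Qed.

Lemma lang_extendl w : lang X w -> exists a, lang X (a :: w).
Proof.
case=> x [Xx [i /(occursP _ _ _ (x i)) xw]]; exists (x (i - 1)%R), x; split=> //.
exists (i - 1)%R; apply/(occursP _ _ _ (x i)) => -[|k] kw /=; first by congr x; lia.
by rewrite -xw //; congr x; lia.
Qed.

Lemma lang_extendr w : lang X w -> exists b, lang X (rcons w b).
Proof.
case=> x [Xx [i /(occursP _ _ _ (x i)) xw]]; exists (x (i + (size w)%:Z)%R), x.
split=> //; exists i; apply/(occursP _ _ _ (x i)) => k.
rewrite size_rcons ltnS leq_eqVlt nth_rcons => /orP[/eqP-> | kw]; first by rewrite ltnn eqxx.
by rewrite kw xw.
Qed.

End ShiftLanguage.

Theorem mainTheorem7 (A : finType) (X : point A -> Prop)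
    (HX : shift_space X) (Halph : forall a : A, lang X [:: a]) :
  (dendric X <->
     forall n : nat, label_acyclic (GL X n) /\ mg_connected (GL X n)) /\
  (dendric X <->
     forall n : nat, label_acyclic (GR X n) /\ mg_connected (GR X n)).
Proof.
have behead := @lang_behead A X; have belast := @lang_belast A X.
split; first exact: dendric_lang_leftP behead belast (@lang_extendl A X) Halph.
exact: dendric_lang_rightP behead belast (@lang_extendr A X) Halph.
Qed.
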